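(* The following two statements are equivalent: (a) Every cyclically $4$-edge-connected cubic graph $G$ admits a proper $5$-edge-coloring $c$ with $|N_G(c)|\le 9$. (b) There exists a sublinear function $f:\mathbb{N}\to\mathbb{N}$ such that every cyclically $4$-edge-connected cubic graph $G$ admits a proper $5$-edge-coloring $c$ with $|N_G(c)|\le f(|V(G)|)$.
   Context: Graphs are finite, undirected, loopless, and may contain parallel edges. A cubic graph is cyclically $4$-edge-connected if it has no edge cut of size less than $4$ whose removal leaves at least two components each containing a cycle. A proper $k$-edge-coloring of $G$ is a map $c:E(G)\to\{1,\dots,k\}$ with adjacent edges receiving different colors. For such $c$ and a vertex $v$, $S_c(v)$ is the set of colors on edges incident to $v$. An edge $uv$ of a cubic graph is poor if $|S_c(u)\cup S_c(v)|=3$, rich if $|S_c(u)\cup S_c(v)|=5$, and abnormal if it is neither poor nor rich. $N_G(c)$ denotes the set of abnormal edges of $G$ with respect to $c$. A function $f:\mathbb{N}\to\mathbb{N}$ is sublinear if $\lim_{n\to\infty} f(n)/n=0$. *)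

From mathcomp Require Import all_boot.
From Stdlib Require Import Rdefinitions Raxioms RIneq Rseries.
Set Implicit Arguments. Unset Strict Implicit. Unset Printing Implicit Defensive.

(* A finite loopless multigraph is given by a finite vertex type V, a finite
   edge type E and two endpoint maps s t : E -> V (parallel edges allowed). *)
Section Multigraph.
Variables (V E : finType) (s t : E -> V).

Definition loopless : Prop := forall e, s e != t e.

Definition incident (v : V) : {set E} := [set e | (s e == v) || (t e == v)].

Definition cubic : Prop := forall v, #|incident v| = 3.

Definition adjG (A : {set E}) : rel V :=
  fun x y => [exists e in A, ((s e == x) && (t e == y)) || ((s e == y) && (t e == x))].

Definition deg_in (A : {set E}) (v : V) : nat := #|A :&: incident v|.

Definition is_cycle (C : {set E}) : Prop :=
  [/\ C != set0,
      (forall v, deg_in C v = 0 \/ deg_in C v = 2) &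
      (forall e1 e2, e1 \in C -> e2 \in C -> connect (adjG C) (s e1) (s e2))].

Definition comp_has_cycle (F : {set E}) (x : V) : Prop :=
  exists C : {set E}, [/\ is_cycle C, C \subset ~: F &
    (forall e, e \in C -> connect (adjG (~: F)) x (s e))].

Definition cyc4_edge_connected : Prop :=
  forall F : {set E}, #|F| < 4 ->
    ~ (exists x y : V, [/\ ~~ connect (adjG (~: F)) x y,
                           comp_has_cycle F x & comp_has_cycle F y]).

(* edge colorings with 5 colours; colour i : 'I_5 stands for i+1 *)
Definition proper_coloring (c : E -> 'I_5) : Prop :=
  forall v, {in incident v &, injective c}.

Definition colset (c : E -> 'I_5) (v : V) : {set 'I_5} := c @: incident v.

Definition poor (c : E -> 'I_5) (e : E) : bool :=
  #|colset c (s e) :|: colset c (t e)| == 3.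
Definition rich (c : E -> 'I_5) (e : E) : bool :=
  #|colset c (s e) :|: colset c (t e)| == 5.

Definition abnormal_edges (c : E -> 'I_5) : {set E} :=
  [set e | ~~ poor c e && ~~ rich c e].

End Multigraph.

Definition c4c_cubic (V E : finType) (s t : E -> V) : Prop :=
  [/\ loopless s t, cubic s t & cyc4_edge_connected s t].

Definition sublinear (f : nat -> nat) : Prop :=
  Un_cv (fun n => Rdiv (INR (f n)) (INR n)) R0.

(* (a) gives (b) with the constant function 9.  Conversely, suppose a cyclically
   4-edge-connected cubic graph G has no proper 5-edge-colouring with at most
   nine abnormal edges.  Choose a path e1 g e2 with three edges in G and twist G
   along D = {e1, e2}: the cyclic cover with k+2 layers, in which the copies of
   e1 and e2 lead from each layer to the next, is again cubic and cyclically
   4-edge-connected (for cubic graphs this says that every cut of at most three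
   edges cuts off at most one vertex, and such cuts of the cover are confined
   to one layer).  Every proper colouring of the cover
   restricts to each layer, after recolouring e1 and e2, as a proper colouring
   of G that agrees with it away from the nine edges around the path; so every
   layer carries an abnormal edge.  Thus f((k+2)|V(G)|) >= k+2 for all k, and
   f is not sublinear. *)

From Stdlib Require Import Reals Lra Lia Classical.
From mathcomp Require Import all_boot zify.
Set Implicit Arguments. Unset Strict Implicit. Unset Printing Implicit Defensive.

Section Handshake.
Variables (V E : finType) (s t : E -> V).

Definition boundary (A : {set V}) : {set E} := [set e | (s e \in A) != (t e \in A)].
Definition inner_edges (A : {set V}) : {set E} := [set e | (s e \in A) && (t e \in A)].

Lemma boundaryC (A : {set V}) : boundary (~: A) = boundary A.
Proof. by apply/setP => e; rewrite !inE; case: (s e \in A); case: (t e \in A). Qed.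

Lemma boundary_set1 y : loopless s t -> boundary [set y] = incident s t y.
Proof.
move=> hl; apply/setP => e; rewrite !inE.
case: (s e =P y) => [sy|]; case: (t e =P y) => [ty|] //=.
by move: (hl e); rewrite sy ty eqxx.
Qed.

Lemma card_sum_mem (T : finType) (X : {set T}) : #|X| = \sum_x ((x \in X) : nat).
Proof. by rewrite -sum1_card big_mkcond /=; apply: eq_bigr => e _; case: (e \in _). Qed.

Lemma sum_mem_eq1 (A : {set V}) a : \sum_(v in A) ((v == a) : nat) = (a \in A).
Proof.
rewrite big_mkcond /= (bigD1 a) //= big1 ?addn0; first by rewrite eqxx; case: (a \in A).
by move=> v /negbTE ->; case: (v \in A).
Qed.

Lemma sum_card_incident (A : {set V}) : loopless s t ->
  \sum_(v in A) #|incident s t v| = 2 * #|inner_edges A| + #|boundary A|.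
Proof.
move=> hl.
transitivity (\sum_(v in A) \sum_e ((e \in incident s t v) : nat)).
  by apply: eq_bigr => v _; rewrite card_sum_mem.
rewrite exchange_big /=.
transitivity (\sum_e (2 * (e \in inner_edges A) + (e \in boundary A))).
  apply: eq_bigr => e _.
  rewrite (eq_bigr (fun v => ((v == s e) : nat) + (v == t e))); last first.
    move=> v _; rewrite inE (eq_sym (s e)) (eq_sym (t e)); case: (v =P s e) => [->|] //=.
    by rewrite (negbTE (hl e)).
  rewrite big_split /= !sum_mem_eq1 !inE.
  by case: (s e \in A); case: (t e \in A).
by rewrite big_split /= -big_distrr /= -!card_sum_mem.
Qed.

Lemma cubic_boundary (A : {set V}) : loopless s t -> cubic s t ->
  #|boundary A| + 2 * #|inner_edges A| = 3 * #|A|.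
Proof.
move=> hl hc; have := sum_card_incident A hl.
by rewrite (eq_bigr (fun _ => 3)) ?sum_nat_const => [|v _]; [lia | apply: hc].
Qed.

End Handshake.

Section Cycles.
Variables (V E : finType) (s t : E -> V).
Hypothesis hl : loopless s t.

Lemma deg_in_setU1 (f : E) (P : {set E}) (v : V) : f \notin P ->
  deg_in s t (f |: P) v = deg_in s t P v + (f \in incident s t v).
Proof.
move=> fP; rewrite /deg_in setIUl; case: (boolP (f \in incident s t v)) => h.
  have -> : [set f] :&: incident s t v = [set f].
    by apply/setP => x; rewrite !inE; case: (x =P f) => // ->; move: h; rewrite inE.
  by rewrite cardsU1 inE (negbTE fP) /= addnC.
have -> : [set f] :&: incident s t v = set0.
  by apply/setP => x; rewrite !inE; case: (x =P f) => // ->; move: h; rewrite inE => /negbTE ->.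
by rewrite set0U addn0.
Qed.

Lemma deg_in_set1 (f : E) (v : V) : deg_in s t [set f] v = (f \in incident s t v).
Proof. by rewrite -(setU0 [set f]) deg_in_setU1 ?inE // /deg_in set0I cards0. Qed.

Lemma adjG_sym (B : {set E}) : symmetric (adjG s t B).
Proof.
move=> x y; apply/existsP/existsP => [[e He]|[e He]]; exists e; move: He;
by case/andP => -> /=; rewrite orbC.
Qed.

Lemma connect_adjG_sym (B : {set E}) : connect_sym (adjG s t B).
Proof. exact/sym_connect_sym/adjG_sym. Qed.

Lemma connect_adjG_sub (B B' : {set E}) x y : B \subset B' ->
  connect (adjG s t B) x y -> connect (adjG s t B') x y.
Proof.
move=> sub; apply: connect_sub => u w /existsP[e /andP[eB h]]; apply: connect1.
by apply/existsP; exists e; rewrite (subsetP sub _ eB).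
Qed.

Lemma adjG_edge (B : {set E}) f : f \in B -> adjG s t B (s f) (t f).
Proof. move=> fB; apply/existsP; exists f; by rewrite fB !eqxx. Qed.

(* The support clause is only there to drive the induction. *)
Lemma path_edge_set (B : {set E}) a p : path (adjG s t B) a p -> uniq (a :: p) -> p != [::] ->
  exists P : {set E}, [/\ P \subset B, deg_in s t P a = 1, deg_in s t P (last a p) = 1,
    (forall v, v != a -> v != last a p -> deg_in s t P v = 0 \/ deg_in s t P v = 2) &
    (forall v, 0 < deg_in s t P v -> v \in a :: p) /\
    (forall e, e \in P -> connect (adjG s t P) a (s e))].
Proof.
elim: p a => [//|c p IH] a /= /andP[/existsP[f /andP[fB hf]] pth] /andP[anin un] _.
have finc v : (f \in incident s t v) = (v == a) || (v == c).
  rewrite inE; case/orP: hf => /andP[/eqP -> /eqP ->]; first by rewrite !(eq_sym v).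
  by rewrite orbC !(eq_sym v).
have conn_f : connect (adjG s t [set f]) a (s f) /\ connect (adjG s t [set f]) a c.
  have fac : adjG s t [set f] a c by apply/existsP; exists f; rewrite inE eqxx.
  split; last exact: connect1 fac.
  by case/orP: hf => /andP[/eqP -> _]; [exact: connect0 | exact: connect1 fac].
case: p pth un IH anin => [|d p] pth un IH anin.
  exists [set f]; split; rewrite ?sub1set ?deg_in_set1 ?finc ?eqxx ?orbT //.
    by move=> v /negbTE h1 /negbTE h2; left; rewrite deg_in_set1 finc h1 h2.
  split; first by move=> v; rewrite deg_in_set1 finc !inE; case: (v == a); case: (v == c).
  by move=> e; rewrite inE => /eqP ->; case: conn_f.
have [P [PB Pc Pb Po [Psupp Pconn]]] := IH c pth un isT.
have aP : deg_in s t P a = 0.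
  by case: (posnP (deg_in s t P a)) => // /Psupp; rewrite (negbTE anin).
have fP : f \notin P.
  apply/negP => fP; have : f \in P :&: incident s t a by rewrite inE fP finc eqxx.
  by rewrite /deg_in in aP; rewrite (cards0_eq aP) inE.
have lst_a : last c (d :: p) != a by apply: contraNneq anin => <-; exact: mem_last.
have lst_c : last c (d :: p) != c.
  by case/andP: un => cn _; apply: contraNneq cn => <-; exact: (mem_last d p).
exists (f |: P); split.
- by rewrite subUset sub1set fB PB.
- by rewrite deg_in_setU1 // aP finc eqxx.
- by rewrite deg_in_setU1 // Pb finc (negbTE lst_a) (negbTE lst_c).
- move=> v va vb; rewrite deg_in_setU1 // finc (negbTE va) /=.
  case: (v =P c) => [->|/eqP vc]; first by rewrite Pc; right.
  by rewrite addn0; apply: Po.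
split.
- move=> v; rewrite deg_in_setU1 // finc; case: (v =P a) => [->|_]; first by move=> _; rewrite inE eqxx.
  case: (v =P c) => [->|_]; first by move=> _; rewrite !inE eqxx orbT.
  by rewrite addn0 => /Psupp h; rewrite inE h orbT.
- have cfa : connect (adjG s t (f |: P)) a c.
    by apply: connect_adjG_sub (proj2 conn_f); rewrite sub1set setU11.
  move=> e; rewrite !inE => /orP[/eqP ->|eP].
    by apply: connect_adjG_sub (proj1 conn_f); rewrite sub1set setU11.
  by apply: connect_trans cfa (connect_adjG_sub (subsetUr _ _) (Pconn e eP)).
Qed.

Lemma cycle_of_connected_ends (B : {set E}) e : e \notin B ->
  connect (adjG s t B) (s e) (t e) -> exists2 C : {set E}, C \subset e |: B & is_cycle s t C.
Proof.
move=> eB /connectP[p pth lst].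
case/shortenP: pth lst => p' pth' un' _ lst.
have p'n : p' != [::] by case: p' lst {pth' un'} => //= h; move: (hl e); rewrite h eqxx.
have [P [PB Pa Pb Po [_ Pconn]]] := path_edge_set pth' un' p'n.
rewrite -lst in Pb Po.
have eP : e \notin P by apply: contraNN eB => /(subsetP PB).
have conn f : f \in e |: P -> connect (adjG s t (e |: P)) (s e) (s f).
  rewrite !inE => /orP[/eqP ->|fP]; first exact: connect0.
  exact: connect_adjG_sub (subsetUr _ _) (Pconn f fP).
exists (e |: P); first exact: setUS.
split.
- by apply/set0Pn; exists e; exact: setU11.
- move=> v; rewrite deg_in_setU1 // inE !(eq_sym _ v).
  case: (v =P s e) => [->|va]; first by rewrite Pa; right.
  case: (v =P t e) => [->|vb]; first by rewrite Pb; right.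
  by rewrite addn0; apply: Po; apply/eqP.
- move=> e1 e2 h1 h2; apply: connect_trans (conn _ h2).
  by rewrite connect_adjG_sym; exact: conn.
Qed.

(* Either the two ends of some edge [e] stay connected without [e], or
   deleting [e] splits the vertices into two sides one of which is still at
   least as dense as [A]. *)
Lemma cycle_of_dense_edge_set n : forall (B : {set E}) (A : {set V}), #|B| <= n ->
  (forall e, e \in B -> (s e \in A) && (t e \in A)) -> 0 < #|A| <= #|B| ->
  exists2 C : {set E}, C \subset B & is_cycle s t C.
Proof.
elim: n => [|n IH] B A Bn BA /andP[A0 AB].
  by move: (leq_trans A0 (leq_trans AB Bn)).
have [e eB] : exists e, e \in B by apply/card_gt0P; apply: leq_trans A0 AB.
set B' := B :\ e.
have eB' : e \notin B' by rewrite !inE eqxx.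
have BB' : e |: B' = B by rewrite setD1K.
have B'B f : f \in B' -> f \in B by rewrite inE => /andP[].
case: (boolP (connect (adjG s t B') (s e) (t e))) => hc.
  by have [C CB Cc] := cycle_of_connected_ends eB' hc; exists C; rewrite // -BB'.
set A1 := [set v in A | connect (adjG s t B') (s e) v].
set X := [set f | s f \in A1].
have [seA teA] : (s e \in A) /\ (t e \in A) by apply/andP; apply: BA.
have A10 : 0 < #|A1| by apply/card_gt0P; exists (s e); rewrite inE seA connect0.
have A20 : 0 < #|A :\: A1| by apply/card_gt0P; exists (t e); rewrite !inE teA (negbTE hc) andbF.
have cA : #|A1| + #|A :\: A1| = #|A|.
  have sA1 : A1 \subset A by apply/subsetP => v; rewrite inE => /andP[].
  by rewrite -(cardsID A1 A) (setIidPr sA1).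
have cB : #|B' :&: X| + #|B' :\: X| + 1 = #|B| by rewrite cardsID -BB' cardsU1 eB' addnC.
have A1_closed f : f \in B' -> (s f \in A1) = (t f \in A1).
  move=> fB'; have /andP[sA tA] := BA f (B'B f fB'); rewrite !inE sA tA /=.
  have [sf tf] := (connect1 (adjG_edge fB'), connect1 (adjG_edge fB')).
  apply/idP/idP => h; first exact: connect_trans h sf.
  by apply: connect_trans h _; rewrite connect_adjG_sym; apply: connect1; exact: adjG_edge.
have sub_B (C : {set E}) : C \subset B' -> C \subset B by move/subset_trans; apply; apply/subsetP.
case: (leqP #|A1| #|B' :&: X|) => h1.
  have [|f /setIP[fB' fX]|C CB Cc] := IH (B' :&: X) A1 _ _ (introT andP (conj A10 h1)).
  - by have := subset_leq_card (subsetIl B' X); lia.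
  - by move: fX; rewrite inE -A1_closed // => ->.
  by exists C => //; apply: sub_B (subset_trans CB (subsetIl _ _)).
have h2 : #|A :\: A1| <= #|B' :\: X| by lia.
have [|f /setDP[fB' fX]|C CB Cc] := IH (B' :\: X) (A :\: A1) _ _ (introT andP (conj A20 h2)).
- by have := subset_leq_card (subsetDl B' X); lia.
- have /andP[sA tA] := BA f (B'B f fB'); move: fX.
  by rewrite !in_setD sA tA -(A1_closed f fB') inE andbb => ->.
by exists C => //; apply: sub_B (subset_trans CB (subsetDl _ _)).
Qed.

End Cycles.

Section Cuts.
Variables (V E : finType) (s t : E -> V).
Hypothesis hl : loopless s t.

Definition trivial_3cuts : Prop :=
  forall A : {set V}, #|boundary s t A| <= 3 -> #|A| <= 1 \/ #|~: A| <= 1.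

Lemma closed_boundary (A : {set V}) : closed (adjG s t (~: boundary s t A)) A.
Proof.
move=> x y /existsP[e /andP[]]; rewrite !inE negbK => /eqP h.
by case/orP => /andP[/eqP <- /eqP <-].
Qed.

Lemma cycle_inside_3cut (A : {set V}) : cubic s t ->
  #|boundary s t A| <= 3 -> 2 <= #|A| ->
  exists2 C : {set E}, C \subset inner_edges s t A & is_cycle s t C.
Proof.
move=> hc d3 A2; have := cubic_boundary A hl hc => hs.
apply: (@cycle_of_dense_edge_set _ _ s t hl _ _ A (leqnn _)); first by move=> e; rewrite inE.
by apply/andP; split; [exact: leq_trans A2 | lia].
Qed.

Lemma comp_has_cycle_inside (A : {set V}) (C : {set E}) e : C \subset inner_edges s t A ->
  is_cycle s t C -> e \in C -> comp_has_cycle s t (boundary s t A) (s e).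
Proof.
move=> CA Cc eC; have CF : C \subset ~: boundary s t A.
  by apply/subsetP => f /(subsetP CA); rewrite !inE negbK => /andP[-> ->].
exists C; split => // f fC; case: Cc => _ _ /(_ e f eC fC); exact: connect_adjG_sub.
Qed.

Lemma c4c_trivial_3cuts : cubic s t -> cyc4_edge_connected s t -> trivial_3cuts.
Proof.
move=> hc h4 A dA.
case: (leqP #|A| 1) => a1; first by left.
case: (leqP #|~: A| 1) => a2; first by right.
have [C1 C1A C1c] := cycle_inside_3cut hc dA a1.
have [C2 C2A C2c] : exists2 C : {set E}, C \subset inner_edges s t (~: A) & is_cycle s t C.
  by apply: cycle_inside_3cut; rewrite ?boundaryC.
case: (C1c) (C2c) => /set0Pn[e1 e1C] _ _ [/set0Pn[e2 e2C] _ _].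
case: (h4 (boundary s t A)); first exact: leq_ltn_trans dA _.
exists (s e1), (s e2); split.
- apply/negP => /(closed_connect (@closed_boundary A)).
  move: (subsetP C1A e1 e1C) (subsetP C2A e2 e2C); rewrite !inE => /andP[-> _] /andP[/negbTE -> _].
  by [].
- exact: (comp_has_cycle_inside C1A).
- by rewrite -boundaryC; exact: (comp_has_cycle_inside C2A).
Qed.

Lemma cycle_two_vertices (B : {set V}) (C : {set E}) : is_cycle s t C ->
  (forall e, e \in C -> (s e \in B) && (t e \in B)) -> 1 < #|B|.
Proof.
case=> /set0Pn[e eC] _ _ hC; have /andP[sB tB] := hC e eC.
have : [set s e; t e] \subset B by rewrite subUset !sub1set sB tB.
by move/subset_leq_card; rewrite cards2 (hl e).
Qed.

Lemma trivial_3cuts_c4c : trivial_3cuts -> cyc4_edge_connected s t.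
Proof.
move=> hcp F F4 [x [y [nxy [C1 [C1c C1F C1x]] [C2 [C2c C2F C2y]]]]].
set A := [set z | connect (adjG s t (~: F)) x z].
have dF : boundary s t A \subset F.
  apply/subsetP => e; rewrite !inE; apply: contraR => eF.
  have ad : adjG s t (~: F) (s e) (t e) by apply: adjG_edge; rewrite inE.
  apply/eqP; apply/idP/idP => h; first by apply: connect_trans h (connect1 ad).
  by apply: connect_trans h (connect1 _); rewrite adjG_sym.
have ends_conn z (C : {set E}) e : C \subset ~: F -> e \in C -> connect (adjG s t (~: F)) z (s e) ->
    connect (adjG s t (~: F)) z (s e) && connect (adjG s t (~: F)) z (t e).
  move=> CF eC h; rewrite h; apply: connect_trans h (connect1 _).
  exact/adjG_edge/(subsetP CF).
have h1 : 1 < #|A|.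
  by apply: (cycle_two_vertices C1c) => e eC; rewrite !inE; apply: ends_conn C1F eC (C1x e eC).
have h2 : 1 < #|~: A|.
  apply: (cycle_two_vertices C2c) => e eC; rewrite !inE -negb_or; apply: contra nxy.
  have /andP[ys yt] := ends_conn y C2 e C2F eC (C2y e eC).
  by case/orP => h; apply: connect_trans h _; rewrite connect_adjG_sym.
have : #|boundary s t A| <= 3 by apply: leq_trans (subset_leq_card dF) _; rewrite -ltnS.
by case/hcp; lia.
Qed.

End Cuts.

Section CyclicOrder.
Variable n : nat.

Lemma val_iter_ordS (i : 'I_n.+1) m : val (iter m (@ordS _) i) = (i + m) %% n.+1.
Proof.
elim: m => [|m IH] /=; first by rewrite addn0 modn_small.
by rewrite IH -addn1 modnDml addn1 addnS.
Qed.

Lemma ordS_closed_full (S : pred 'I_n.+1) i : S i ->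
  (forall j, S j -> S (ordS j)) -> forall j, S j.
Proof.
move=> Si SS j; have -> : j = iter (j + n.+1 - i) (@ordS _) i.
  apply: val_inj; rewrite val_iter_ordS.
  have -> : i + (j + n.+1 - i) = j + n.+1 by have := ltn_ord i; lia.
  by rewrite modnDr modn_small.
by elim: (_ - _) => //= m; apply: SS.
Qed.

Lemma ordS_invariant_but_one (T : eqType) (P : 'I_n.+1 -> T) (i0 : 'I_n.+1) :
  (forall i, i != i0 -> P i = P (ordS i)) -> forall i, P i = P (ordS i0).
Proof.
move=> hP i; apply/eqP; apply: (@ordS_closed_full (fun j => P j == P (ordS i0)) (ordS i0)) => // j.
by case: (j =P i0) => [->|/eqP ji0 /eqP <-] //; rewrite (hP j ji0).
Qed.

End CyclicOrder.

Lemma ordS_neq k (i : 'I_k.+2) : ordS i != i.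
Proof.
apply/eqP => /(congr1 val) /=; case: (ltnP i.+1 k.+2) => h.
  by rewrite modn_small //; lia.
have -> : i.+1 = k.+2 by have := ltn_ord i; lia.
by rewrite modnn => hh; have := ltn_ord i; lia.
Qed.

Lemma ord_pred_neq k (i : 'I_k.+2) : ord_pred i != i.
Proof. by apply/eqP => h; have := @ordS_neq k (ord_pred i); rewrite ord_predK h eqxx. Qed.

(* The (k+2)-fold cyclic cover of G twisted along D: vertex (x, i) lies in
   layer i, and the copy (e, i) of an edge e of D runs from layer i to layer
   i + 1 (mod k+2), while the copies of the other edges stay in their layer. *)
Section Cover.
Variables (V E : finType) (s t : E -> V) (D : {set E}) (k : nat).
Hypothesis hl : loopless s t.

Definition cover_src (p : E * 'I_k.+2) : V * 'I_k.+2 := (s p.1, p.2).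
Definition cover_tgt (p : E * 'I_k.+2) : V * 'I_k.+2 :=
  (t p.1, if p.1 \in D then ordS p.2 else p.2).

Lemma cover_loopless : loopless cover_src cover_tgt.
Proof. by move=> [e i]; rewrite /cover_src /cover_tgt /= xpair_eqE negb_and (hl e). Qed.

(* the layer of the copy of e at the vertex (x, i) *)
Definition cover_layer (x : V) (i : 'I_k.+2) (e : E) : 'I_k.+2 :=
  if (s e != x) && (e \in D) then ord_pred i else i.

Lemma cover_incident x i :
  incident cover_src cover_tgt (x, i) = (fun e => (e, cover_layer x i e)) @: incident s t x.
Proof.
apply/setP => [[e j]]; rewrite inE /cover_src /cover_tgt /cover_layer /= !xpair_eqE.
apply/idP/imsetP.
  case/orP => [/andP[/eqP sx /eqP ji]|/andP[/eqP tx /eqP ji]].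
    by exists e; rewrite ?inE sx ?eqxx ?ji.
  exists e; first by rewrite inE tx eqxx orbT.
  have -> : s e != x by rewrite -tx hl.
  by case: (e \in D) ji => <-; rewrite ?ordSK.
case=> f; rewrite inE => /orP[/eqP sx|/eqP tx] [-> ->]; first by rewrite sx eqxx /= ?eqxx.
have -> : s f != x by rewrite -tx hl.
by rewrite tx eqxx /=; case: (f \in D); rewrite ?ord_predK !eqxx ?orbT.
Qed.

Lemma cover_cubic : cubic s t -> cubic cover_src cover_tgt.
Proof. by move=> hc [x i]; rewrite cover_incident card_imset ?hc // => e1 e2 []. Qed.

End Cover.

Lemma leq4_card_disjoint (T : finType) (X A B : {set T}) : A \subset X -> B \subset X ->
  [disjoint A & B] -> 2 <= #|A| -> 2 <= #|B| -> 4 <= #|X|.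
Proof.
move=> AX BX dAB hA hB; apply: leq_trans (subset_leq_card (_ : A :|: B \subset X)).
  by rewrite cardsU (disjoint_setI0 dAB) cards0 subn0; lia.
by rewrite subUset AX BX.
Qed.

Section CoverCuts.
Variables (V E : finType) (s t : E -> V) (D : {set E}) (k : nat).
Hypothesis hl : loopless s t.
Hypothesis hc : cubic s t.
Hypothesis hcut : trivial_3cuts s t.
Hypothesis card_D : #|D| = 2.
Hypothesis D_matching : forall y, #|incident s t y :&: D| <= 1.

Local Notation L := 'I_k.+2.
Local Notation Hs := (cover_src s (k := k)).
Local Notation Ht := (cover_tgt t D (k := k)).

Definition layer (S : {set V * L}) (i : L) : {set V} := [set x | (x, i) \in S].
Definition in_layer (i : L) (X : {set E}) : {set E * L} := (fun e => (e, i)) @: X.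

Lemma mem_cover_boundary S e i : ((e, i) \in boundary Hs Ht S) =
  (((s e, i) \in S) != ((t e, if e \in D then ordS i else i) \in S)).
Proof. by rewrite inE. Qed.

Lemma card_in_layer i X : #|in_layer i X| = #|X|.
Proof. by rewrite card_imset // => a b []. Qed.

Lemma disjoint_in_layer i j X Y : i != j -> [disjoint in_layer i X & in_layer j Y].
Proof.
move=> ij; rewrite -setI_eq0; apply/eqP/setP => [[e l]]; rewrite !inE.
by apply/andP => [[/imsetP[a _ [_ ->]] /imsetP[b _ [_ h]]]]; rewrite h eqxx in ij.
Qed.

Lemma in_layer_boundary S i : in_layer i (boundary s t (layer S i) :\: D) \subset boundary Hs Ht S.
Proof.
apply/subsetP => p /imsetP[e]; rewrite !inE => /andP[eD de] ->.
by rewrite /cover_src /cover_tgt /= (negbTE eD).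
Qed.

Lemma set1_or_setC1 (A : {set V}) : A != set0 -> A != setT ->
  #|boundary s t A| <= 3 -> exists y, A = [set y] \/ A = ~: [set y].
Proof.
move=> A0 AT /hcut[] h.
  have /cards1P[y ->] : #|A| == 1 by rewrite eqn_leq h card_gt0.
  by exists y; left.
have /cards1P[y hy] : #|~: A| == 1.
  by rewrite eqn_leq h card_gt0; apply: contra AT => /eqP h0; rewrite -(setCK A) h0 setC0.
by exists y; right; rewrite -hy setCK.
Qed.

Lemma boundary_setD_ge2 (A : {set V}) : A != set0 -> A != setT ->
  2 <= #|boundary s t A :\: D|.
Proof.
move=> A0 AT; have := cardsID D (boundary s t A).
have : #|boundary s t A :&: D| <= 2 by rewrite -card_D; apply/subset_leq_card/subsetIr.
case: (leqP 4 #|boundary s t A|) => [|/ltnSE d3]; first by lia.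
have [y [->|->]] := set1_or_setC1 A0 AT d3; rewrite ?boundaryC boundary_set1 //;
by have := cardsID D (incident s t y); rewrite hc; have := D_matching y; lia.
Qed.

(* A cut of the cover supported in a single layer j projects injectively to a
   cut of G; if that cut were a vertex star, an edge of D avoiding the centre
   would add a fourth boundary edge in the cover. *)
Lemma cover_cut_one_layer S j : (forall i, i != j -> layer S i = set0) ->
  layer S j != setT -> #|boundary Hs Ht S| <= 3 -> #|S| <= 1.
Proof.
move=> h0 hT d3.
have mS x i : ((x, i) \in S) = (i == j) && (x \in layer S j).
  case: (i =P j) => [->|/eqP ij]; first by rewrite inE.
  by have /setP/(_ x) := h0 i ij; rewrite !inE.
have -> : #|S| = #|layer S j|.
  have eS : S = (fun x => (x, j)) @: layer S j.
    apply/setP => [[x i]]; rewrite mS; apply/idP/imsetP => [/andP[/eqP -> h]|[y yS [-> ->]]].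
      by exists x.
    by rewrite eqxx.
  by rewrite {1}eS card_imset // => a b [].
set A := layer S j in hT mS *.
pose lift e := (e, if (e \in D) && (s e \notin A) then ord_pred j else j).
have lift_sub : lift @: boundary s t A \subset boundary Hs Ht S.
  apply/subsetP => p /imsetP[e]; rewrite inE => de ->; rewrite /lift mem_cover_boundary !mS.
  case: (boolP (e \in D)) => eD /=; last by rewrite eqxx.
  case: (boolP (s e \in A)) => sA /=; first by rewrite eqxx /= (negbTE (ordS_neq j)).
  by rewrite ord_predK eqxx (negbTE (ord_pred_neq j)) /=; move: de; rewrite (negbTE sA).
have card_lift : #|lift @: boundary s t A| = #|boundary s t A| by rewrite card_imset // => a b [].
have dA : #|boundary s t A| <= 3 by rewrite -card_lift; exact: leq_trans (subset_leq_card lift_sub) d3.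
have [->|A0] := eqVneq A set0; first by rewrite cards0.
have [y [->|Ay]] := set1_or_setC1 A0 hT dA; first by rewrite cards1.
have dy : boundary s t A = incident s t y by rewrite Ay boundaryC boundary_set1.
have [e eD ey] : exists2 e, e \in D & e \notin incident s t y.
  apply/exists_inP; rewrite -negb_forall_in; apply/negP => /forall_inP Dy.
  have : D \subset incident s t y :&: D by apply/subsetP => f fD; rewrite inE Dy.
  by move/subset_leq_card; rewrite card_D; have := D_matching y; lia.
have eA v : v != y -> v \in A by move=> vy; rewrite Ay !inE.
have ein : (e, j) \in boundary Hs Ht S.
  move: ey; rewrite inE negb_or => /andP[sy ty].
  by rewrite mem_cover_boundary eD !mS eqxx (negbTE (ordS_neq j)) /= eA.
have enot : (e, j) \notin lift @: boundary s t A.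
  by apply/imsetP => [[f]]; rewrite dy => fy [ef _]; move: fy; rewrite -ef (negbTE ey).
have : #|(e, j) |: lift @: boundary s t A| <= 3.
  by apply: leq_trans d3; apply: subset_leq_card; rewrite subUset sub1set ein lift_sub.
by rewrite cardsU1 enot card_lift dy hc.
Qed.

Section OneCut.
Variable S : {set V * L}.
Hypothesis dS : #|boundary Hs Ht S| <= 3.

Let full i := layer S i == setT.
Let mixed i := (layer S i != set0) && (layer S i != setT).

Lemma pure_layer i : ~~ mixed i -> layer S i = set0 \/ layer S i = setT.
Proof. by rewrite /mixed negb_and !negbK => /orP[/eqP|/eqP]; [left|right]. Qed.

Lemma mixed_layer_boundary i : mixed i ->
  2 <= #|in_layer i (boundary s t (layer S i) :\: D)|.
Proof. by case/andP=> h0 hT; rewrite card_in_layer; apply: boundary_setD_ge2. Qed.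

Lemma switch_layer_boundary i : ~~ mixed i -> ~~ mixed (ordS i) -> full i != full (ordS i) ->
  in_layer i D \subset boundary Hs Ht S.
Proof.
move=> mi mSi fi; apply/subsetP => p /imsetP[e eD ->]; rewrite mem_cover_boundary eD.
have memS l x : layer S l = set0 \/ layer S l = setT -> ((x, l) \in S) = full l.
  rewrite /full; case=> h; rewrite h; have /setP/(_ x) := h; rewrite !inE => ->.
  - by apply/esym/eqP => /setP/(_ x); rewrite !inE.
  - by rewrite eqxx.
by rewrite !memS; [exact: fi | exact: pure_layer | exact: pure_layer].
Qed.

Lemma one_contribution (X Y : {set E * L}) : X \subset boundary Hs Ht S ->
  Y \subset boundary Hs Ht S -> [disjoint X & Y] -> 2 <= #|X| -> 2 <= #|Y| -> False.
Proof. by move=> hX hY dXY h1 h2; have := leq_trans (leq4_card_disjoint hX hY dXY h1 h2) dS. Qed.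

Lemma card_in_layer_D i : 2 <= #|in_layer i D|.
Proof. by rewrite card_in_layer card_D. Qed.

Lemma cover_cut_mixed j : mixed j -> #|S| <= 1 \/ #|~: S| <= 1.
Proof.
move=> mj.
have pure i : i != j -> ~~ mixed i.
  move=> ij; apply/negP => mi; apply: (one_contribution (in_layer_boundary S i)
    (in_layer_boundary S j) (disjoint_in_layer _ _ ij)); exact: mixed_layer_boundary.
have no_switch i : i != j -> i != ord_pred j -> full i = full (ordS i).
  move=> ij ipj; case: (boolP (full i == full (ordS i))) => [/eqP //|fi]; exfalso.
  have oj : ordS i != j by apply: contra ipj => /eqP <-; rewrite ordSK.
  apply: (one_contribution (switch_layer_boundary (pure i ij) (pure _ oj) fi)
    (in_layer_boundary S j) (disjoint_in_layer _ _ ij) (card_in_layer_D i)).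
  exact: mixed_layer_boundary.
pose Q i := if i == j then full (ordS j) else full i.
have full_else i : i != j -> full i = full (ordS j).
  move=> ij; have := @ordS_invariant_but_one _ _ Q (ord_pred j) _ i.
  rewrite ord_predK /Q (negbTE ij) eqxx; apply => l lpj; rewrite /Q.
  case: (l =P j) => [->|/eqP lj]; first by rewrite (negbTE (ordS_neq j)).
  have -> : (ordS l == j) = false by apply/negbTE; apply: contra lpj => /eqP <-; rewrite ordSK.
  exact: no_switch.
case/andP: mj => mj0 mjT.
case: (boolP (full (ordS j))) => hb; [right | left].
  apply: (@cover_cut_one_layer (~: S) j); rewrite ?boundaryC //.
  - move=> i ij; apply/setP => x; have := full_else i ij.
    by rewrite hb /full => /eqP/setP/(_ x); rewrite !inE => ->.
  - apply: contra mj0 => /eqP/setP h; apply/eqP/setP => x; move: (h x); rewrite !inE.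
    by case: ((x, j) \in S).
apply: (@cover_cut_one_layer S j) => // i ij.
have := pure i ij; rewrite /mixed /full_else.
by have := full_else i ij; rewrite (negbTE hb) /full => ->; rewrite andbT negbK => /eqP.
Qed.

Lemma cover_cut_pure : (forall i, ~~ mixed i) -> #|S| <= 1 \/ #|~: S| <= 1.
Proof.
move=> pure.
have no_switch i : full i = full (ordS i).
  case: (boolP (full i == full (ordS i))) => [/eqP //|fi]; exfalso.
  have switch_else l : l != i -> full l = full (ordS l).
    move=> li; case: (boolP (full l == full (ordS l))) => [/eqP //|fl]; exfalso.
    apply: (one_contribution
      (switch_layer_boundary (pure l) (pure _) fl) (switch_layer_boundary (pure i) (pure _) fi)
      (disjoint_in_layer _ _ li) (card_in_layer_D l) (card_in_layer_D i)).
  by move/eqP: fi; apply; exact: ordS_invariant_but_one switch_else i.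
have full_all i : full i = full (ordS ord0).
  by apply: ordS_invariant_but_one => l _; exact: no_switch.
case: (boolP (full (ordS ord0))) => hb; [right | left].
  suff -> : ~: S = set0 by rewrite cards0.
  apply/setP => [[x i]]; have := full_all i; rewrite hb /full => /eqP/setP/(_ x).
  by rewrite !inE => ->.
suff -> : S = set0 by rewrite cards0.
apply/setP => [[x i]]; case: (pure_layer (pure i)) => [/setP/(_ x)|h]; rewrite ?inE //.
by move: (full_all i); rewrite (negbTE hb) /full h eqxx.
Qed.

End OneCut.

Lemma cover_trivial_3cuts : trivial_3cuts Hs Ht.
Proof.
move=> S dS; case: (boolP [exists j, (layer S j != set0) && (layer S j != setT)]).
  by case/existsP => j; apply: cover_cut_mixed.
by rewrite negb_exists => /forallP; apply: cover_cut_pure.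
Qed.

End CoverCuts.

Section ProjectColoring.
Variables (V E : finType) (s t : E -> V) (D : {set E}) (k : nat).
Hypothesis hl : loopless s t.
Hypothesis hc : cubic s t.
Hypothesis D_matching : forall y, #|incident s t y :&: D| <= 1.

Local Notation L := 'I_k.+2.
Local Notation Hs := (cover_src s (k := k)).
Local Notation Ht := (cover_tgt t D (k := k)).

Definition ends_of : {set V} := [set y | [exists e in D, e \in incident s t y]].
Definition near_edges : {set E} := [set f | (s f \in ends_of) || (t f \in ends_of)].

Definition adjacent_edges (f : E) : {set E} := (incident s t (s f) :|: incident s t (t f)) :\ f.

Lemma card_adjacent_edges f : #|adjacent_edges f| <= 4.
Proof.
have := cardsU (incident s t (s f)) (incident s t (t f)).
have fU : f \in incident s t (s f) :|: incident s t (t f) by rewrite !inE eqxx.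
have : 0 < #|incident s t (s f) :&: incident s t (t f)|.
  by apply/card_gt0P; exists f; rewrite !inE !eqxx orbT.
have := cardsD1 f (incident s t (s f) :|: incident s t (t f)).
by rewrite fU -/(adjacent_edges f) !hc; lia.
Qed.

Variable cH : E * L -> 'I_5.
Hypothesis cH_proper : proper_coloring Hs Ht cH.

(* Layer i of the cover is G with the edges of D cut open; colouring each edge
   of D afresh with a colour avoiding its at most four neighbours in layer i
   gives a proper colouring of G. *)
Definition forbidden_colors (i : L) (f : E) : {set 'I_5} := [set cH (g, i) | g in adjacent_edges f].

Definition layer_coloring (i : L) (f : E) : 'I_5 :=
  if f \in D then odflt ord0 [pick c | c \notin forbidden_colors i f] else cH (f, i).

Lemma layer_coloring_D i f : f \in D -> layer_coloring i f \notin forbidden_colors i f.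
Proof.
move=> fD; rewrite /layer_coloring fD; case: pickP => [c //|none].
have : [set: 'I_5] \subset forbidden_colors i f by apply/subsetP => c _; have := none c; case: (c \in _).
have : #|forbidden_colors i f| <= 4 := leq_trans (leq_imset_card _ _) (card_adjacent_edges f).
by move=> le4 /subset_leq_card; rewrite cardsT card_ord; lia.
Qed.

Lemma incident_layer x i f : f \in incident s t x -> f \notin D ->
  (f, i) \in incident Hs Ht (x, i).
Proof.
move=> fx fD; rewrite cover_incident //; apply/imsetP; exists f => //.
by rewrite /cover_layer (negbTE fD) andbF.
Qed.

Lemma layer_coloring_proper i : proper_coloring s t (layer_coloring i).
Proof.
move=> x f1 f2 h1 h2 eqc; apply/eqP; apply: contraT => ne; exfalso.
have adj a b : a \in incident s t x -> b \in incident s t x -> a != b -> b \in adjacent_edges a.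
  move=> ha hb ab; rewrite /adjacent_edges !inE eq_sym ab /=.
  by move: ha hb; rewrite !inE => /orP[/eqP ->|/eqP ->] ->; rewrite ?orbT.
case: (boolP (f1 \in D)) => d1; case: (boolP (f2 \in D)) => d2.
- have : [set f1; f2] \subset incident s t x :&: D by rewrite subUset !sub1set !in_setI h1 h2 d1 d2.
  by move/subset_leq_card; rewrite cards2 ne; have := D_matching x; lia.
- have := layer_coloring_D i d1; rewrite eqc /layer_coloring (negbTE d2).
  by move/negP; apply; apply/imsetP; exists f2 => //; apply: adj.
- have := layer_coloring_D i d2; rewrite -eqc /layer_coloring (negbTE d1).
  by move/negP; apply; apply/imsetP; exists f1 => //; apply: adj; rewrite // eq_sym.
- move: eqc; rewrite /layer_coloring (negbTE d1) (negbTE d2) => eqc.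
  by case: (cH_proper (incident_layer i h1 d1) (incident_layer i h2 d2) eqc) => e12; rewrite e12 eqxx in ne.
Qed.

Lemma notin_D_off_ends y e : y \notin ends_of -> e \in incident s t y -> e \notin D.
Proof. by move=> yW ey; apply: contra yW => eD; rewrite inE; apply/exists_inP; exists e. Qed.

Lemma colset_layer_coloring i y : y \notin ends_of ->
  colset s t (layer_coloring i) y = colset Hs Ht cH (y, i).
Proof.
move=> yW; rewrite /colset cover_incident // -imset_comp.
apply: eq_in_imset => e ey /=; have eD := notin_D_off_ends yW ey.
by rewrite /layer_coloring /cover_layer (negbTE eD) andbF.
Qed.

Lemma abnormal_layer_coloring i : abnormal_edges s t (layer_coloring i) \subset
  near_edges :|: [set f | (f, i) \in abnormal_edges Hs Ht cH].
Proof.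
apply/subsetP => f; rewrite inE => hf; rewrite in_setU.
case: (boolP (f \in near_edges)) => //= fnear.
have [sW tW] : s f \notin ends_of /\ t f \notin ends_of by move: fnear; rewrite inE negb_or => /andP.
have fD : f \notin D by apply: (notin_D_off_ends sW); rewrite inE eqxx.
by move: hf; rewrite !inE /poor /rich /cover_src /cover_tgt /= (negbTE fD) -!colset_layer_coloring.
Qed.

Lemma card_abnormal_cover :
  (forall c, proper_coloring s t c -> 9 < #|abnormal_edges s t c|) ->
  #|near_edges| <= 9 -> k.+2 <= #|abnormal_edges Hs Ht cH|.
Proof.
move=> many near9.
have abn_in i : exists f, (f, i) \in abnormal_edges Hs Ht cH.
  have := leq_trans (many _ (layer_coloring_proper (i := i))) (subset_leq_card (abnormal_layer_coloring i)).
  move/leq_trans/(_ (leq_card_setU _ _)).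
  case: (set_0Vmem [set f | (f, i) \in abnormal_edges Hs Ht cH]) => [->|[f]].
    by rewrite cards0; lia.
  by rewrite inE => hf _; exists f.
have [f0 _] := abn_in ord0.
pose pick_abn (i : L) := (odflt f0 [pick f | (f, i) \in abnormal_edges Hs Ht cH], i).
have : pick_abn @: [set: L] \subset abnormal_edges Hs Ht cH.
  apply/subsetP => p /imsetP[i _ ->]; rewrite /pick_abn; case: pickP => [f //|none].
  by have [f hf] := abn_in i; move: (none f); rewrite hf.
by move/subset_leq_card; rewrite card_imset ?cardsT ?card_ord // => a b [].
Qed.

End ProjectColoring.

Lemma cardsU_shared (T : finType) (A B : {set T}) a b x : #|A| <= a -> #|B| <= b ->
  x \in A -> x \in B -> #|A :|: B| <= a + b - 1.
Proof.
move=> hA hB xA xB; have : 0 < #|A :&: B| by apply/card_gt0P; exists x; rewrite inE xA.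
by have := cardsU A B; lia.
Qed.

Section ChooseD.
Variables (V E : finType) (s t : E -> V).
Hypothesis hl : loopless s t.
Hypothesis hc : cubic s t.

Lemma incident_ends x y e : x != y -> e \in incident s t x -> e \in incident s t y ->
  forall z, (e \in incident s t z) = (z == x) || (z == y).
Proof.
move=> xy ex ey z.
have st : (s e == x) && (t e == y) || (s e == y) && (t e == x).
  rewrite !inE in ex ey; case: (s e =P x) ex => [sx _|_ /eqP tx].
    have ty : t e = y by move: ey; rewrite sx (negbTE xy) => /eqP.
    by rewrite sx ty !eqxx.
  have sy : s e = y by move: ey; rewrite tx (negbTE xy) orbF => /eqP.
  by rewrite sy tx !eqxx orbT.
rewrite inE; case/orP: st => /andP[/eqP -> /eqP ->]; by rewrite (eq_sym x) (eq_sym y) // orbC.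
Qed.

Lemma inner_edges_ends (A : {set V}) x y e : x != y -> e \in incident s t x ->
  e \in incident s t y -> x \in A -> y \in A -> e \in inner_edges s t A.
Proof.
move=> xy ex ey xA yA; have ends := incident_ends xy ex ey.
have [] : e \in incident s t (s e) /\ e \in incident s t (t e) by rewrite !inE !eqxx orbT.
by rewrite !ends inE => /orP[] /eqP -> /orP[] /eqP ->; rewrite ?xA ?yA.
Qed.

Definition opposite_end (x : V) (e : E) : V := if s e == x then t e else s e.

Lemma opposite_end_neq x e : e \in incident s t x -> opposite_end x e != x.
Proof.
rewrite inE /opposite_end; case: (s e =P x) => [<- _|/eqP //].
by rewrite eq_sym hl.
Qed.

Lemma incident_opposite_end x e : e \in incident s t x -> e \in incident s t (opposite_end x e).
Proof. by rewrite !inE /opposite_end; case: (s e =P x) => _; rewrite eqxx ?orbT. Qed.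

Lemma exists_incident_neq x g : exists2 e, e \in incident s t x & e != g.
Proof.
have : 0 < #|incident s t x :\ g|.
  by have := cardsD1 g (incident s t x); rewrite hc; case: (g \in _) => /=; lia.
by case/card_gt0P => e; rewrite !inE => /andP[eg ex]; exists e; rewrite ?inE.
Qed.

Hypothesis hcut : trivial_3cuts s t.
Hypothesis card_V : 5 <= #|V|.

(* A set of two or three vertices spanning as many edges as vertices would have
   at most three boundary edges, and both of its sides would be too large. *)
Lemma no_small_dense_set (A : {set V}) (X : {set E}) : X \subset inner_edges s t A ->
  #|A| <= #|X| -> 2 <= #|A| -> #|A| <= 3 -> False.
Proof.
move=> XA AX A2 A3; have := cubic_boundary A hl hc; have := subset_leq_card XA.
have := cardsC A => cC cX cA; case: (hcut (A := A)); lia.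
Qed.

Lemma no_parallel_edges x y e f : x != y -> e != f ->
  e \in incident s t x -> e \in incident s t y ->
  f \in incident s t x -> f \in incident s t y -> False.
Proof.
move=> xy ef ex ey fx fy; have [xA yA] := (set21 x y, set22 x y).
apply: (@no_small_dense_set [set x; y] [set e; f]); rewrite ?cards2 ?xy ?ef //.
by rewrite subUset !sub1set !(inner_edges_ends xy).
Qed.

Lemma no_triangle x y z e f g : uniq [:: x; y; z] ->
  e \in incident s t x -> e \in incident s t y -> f \in incident s t y ->
  f \in incident s t z -> g \in incident s t z -> g \in incident s t x -> False.
Proof.
move=> uniq3 ex ey fy fz gz gx.
move: uniq3; rewrite /= !inE negb_or -andbA => /and4P[xy xz yz _].
have ends_g := incident_ends xz gx gz.
have ef : e != f by apply: contraTneq ex => ->; rewrite (incident_ends yz fy fz) negb_or xy xz.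
have eg : e != g by apply: contraTneq ey => ->; rewrite ends_g negb_or eq_sym xy yz.
have fg : f != g by apply: contraTneq fy => ->; rewrite ends_g negb_or eq_sym xy yz.
have [xA yA zA] : [/\ x \in [set x; y; z], y \in [set x; y; z] & z \in [set x; y; z]].
  by rewrite !inE !eqxx !orbT.
apply: (@no_small_dense_set [set x; y; z] [set e; f; g]).
- by rewrite !subUset !sub1set (inner_edges_ends xy) // (inner_edges_ends yz) // (inner_edges_ends xz).
- by rewrite -!setUA !cardsU1 !cards1 !inE !negb_or ef eg fg xy xz yz.
- by rewrite -setUA cardsU1 cards2 !inE negb_or xy xz yz.
- by rewrite -setUA cardsU1 cards2; case: (_ \notin _); case: (y != z).
Qed.

Lemma exists_path3 : exists (u v w z : V) (e1 g e2 : E), [/\ uniq [:: u; v; w; z],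
  e1 \in incident s t u /\ e1 \in incident s t v,
  g \in incident s t v /\ g \in incident s t w &
  e2 \in incident s t w /\ e2 \in incident s t z].
Proof.
have [v0 _] : exists v0 : V, v0 \in [set: V] by apply/card_gt0P; rewrite cardsT; lia.
have [g _] : exists g, g \in incident s t v0 by apply/card_gt0P; rewrite hc.
set v := s g; set w := t g.
have vw : v != w := hl g.
have gv : g \in incident s t v by rewrite inE eqxx.
have gw : g \in incident s t w by rewrite inE eqxx orbT.
have [e1 e1v e1g] := exists_incident_neq v g.
have [e2 e2w e2g] := exists_incident_neq w g.
set u := opposite_end v e1; set z := opposite_end w e2.
have uv : u != v := opposite_end_neq e1v.
have zw : z != w := opposite_end_neq e2w.
have e1u : e1 \in incident s t u := incident_opposite_end e1v.
have e2z : e2 \in incident s t z := incident_opposite_end e2w.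
have uw : u != w.
  by apply/eqP => uw; apply: (no_parallel_edges vw e1g e1v _ gv gw); rewrite -uw.
have zv : z != v.
  by apply/eqP => zv; apply: (no_parallel_edges vw e2g _ e2w gv gw); rewrite -zv.
have uz : u != z.
  apply/eqP => uz; apply: (no_triangle (x := u) (y := v) (z := w) _ e1u e1v gv gw e2w).
    by rewrite /= !inE negb_or uv uw vw.
  by rewrite uz.
exists u, v, w, z, e1, g, e2; split => //=.
by rewrite !inE !negb_or uv uw uz vw (eq_sym v z) zv (eq_sym w z) zw.
Qed.

Lemma card_setI2_le1 (T : finType) (X : {set T}) a b : ~~ ((a \in X) && (b \in X)) ->
  #|X :&: [set a; b]| <= 1.
Proof.
move=> nab; rewrite -(cards1 (if a \in X then a else b)); apply/subset_leq_card/subsetP => x.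
rewrite !inE => /andP[xX /orP[]/eqP xe]; subst x; first by rewrite xX.
by case: (a \in X) nab; rewrite ?xX ?eqxx.
Qed.

Lemma exists_twisting_pair : exists D : {set E}, [/\ #|D| = 2,
  forall y, #|incident s t y :&: D| <= 1 & #|near_edges s t D| <= 9].
Proof.
have [u [v [w [z [e1 [g [e2 [uniq4 [e1u e1v] [gv gw] [e2w e2z]]]]]]]]] := exists_path3.
move: uniq4; rewrite /= !inE !negb_or => /and4P[/and3P[uv uw uz] /andP[vw vz] wz _].
have end1 := incident_ends uv e1u e1v; have end2 := incident_ends wz e2w e2z.
have e12 : e1 != e2.
  by apply: contraTneq e1u => ->; rewrite end2 negb_or uw uz.
exists [set e1; e2]; split; first by rewrite cards2 e12.
  move=> y; apply: card_setI2_le1; rewrite end1 end2.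
  apply/negP => /andP[/orP[]/eqP -> /orP[]];
  by rewrite ?(negbTE uw) ?(negbTE uz) ?(negbTE vw) ?(negbTE vz).
have near_sub : near_edges s t [set e1; e2] \subset
    (incident s t u :|: incident s t v) :|: (incident s t w :|: incident s t z).
  apply/subsetP => f; rewrite inE => /orP[]; rewrite inE => /exists_inP[e]; rewrite in_set2 => /orP[] /eqP ->;
  rewrite ?end1 ?end2 => /orP[] /eqP <-; by rewrite !inE eqxx /= ?orbT.
apply: leq_trans (subset_leq_card near_sub) _.
apply: (@cardsU_shared _ _ _ 5 5 g); rewrite ?in_setU ?gv ?gw ?orbT //.
  by apply: (@cardsU_shared _ _ _ 3 3 e1); rewrite ?hc //.
by apply: (@cardsU_shared _ _ _ 3 3 e2); rewrite ?hc //.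
Qed.

End ChooseD.

Section Sublinear.
Local Open Scope R_scope.

Lemma sublinear_const c : sublinear (fun=> c).
Proof.
move=> eps heps.
have c1 : 0 < INR c + 1 by have := pos_INR c; lra.
have [N [hN N0]] := archimed_cor1 (eps / (INR c + 1)) (Rdiv_lt_0_compat _ _ heps c1).
exists N => n nN; rewrite /R_dist Rminus_0_r.
have Npos : 0 < INR N by apply: lt_0_INR.
have Nn : INR N <= INR n by apply: le_INR.
have inv_le : / INR n <= / INR N by apply: Rinv_le_contravar.
have inv_pos : 0 < / INR n by apply: Rinv_0_lt_compat; lra.
have hN' : / INR N * (INR c + 1) < eps.
  have e : eps / (INR c + 1) * (INR c + 1) = eps by field; lra.
  by rewrite -e; apply: Rmult_lt_compat_r.
rewrite Rabs_right /Rdiv; last by apply: Rle_ge; have := pos_INR c; nra.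
by have := pos_INR c; nra.
Qed.

Lemma not_sublinear (f : nat -> nat) n : (0 < n)%N ->
  (forall k, (k.+2 <= f (n * k.+2))%N) -> ~ sublinear f.
Proof.
move=> n0 hf hs.
have hn : 0 < INR n by apply: lt_0_INR; apply/ltP.
have [N hN] := hs (/ INR n) (Rinv_0_lt_compat _ hn).
have := hN (n * N.+2)%N (leP (leq_trans (leqW (leqnSn N)) (leq_pmull _ n0))).
have hfm : INR N.+2 <= INR (f (n * N.+2)%N) by apply: le_INR; apply/leP.
have hN2 : 0 < INR N.+2 by apply: lt_0_INR; lia.
rewrite /R_dist Rminus_0_r mult_INR Rabs_right; last first.
  by apply: Rle_ge; apply: Rle_mult_inv_pos; [exact: pos_INR | nra].
suff : / INR n <= INR (f (n * N.+2)%N) / (INR n * INR N.+2) by lra.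
have -> : / INR n = INR N.+2 / (INR n * INR N.+2) by field; lra.
by rewrite /Rdiv; apply: Rmult_le_compat_r => //; apply/Rlt_le/Rinv_0_lt_compat; nra.
Qed.

End Sublinear.

Lemma cubic_card_edges (V E : finType) (s t : E -> V) : loopless s t -> cubic s t ->
  3 * #|V| = 2 * #|E|.
Proof.
move=> hl hc; have := cubic_boundary [set: V] hl hc.
have -> : boundary s t [set: V] = set0 by apply/setP => e; rewrite !inE.
have -> : inner_edges s t [set: V] = [set: E] by apply/setP => e; rewrite !inE.
by rewrite cards0 !cardsT.
Qed.

Lemma cover_c4c_cubic (V E : finType) (s t : E -> V) (D : {set E}) k :
  c4c_cubic s t -> #|D| = 2 -> (forall y, #|incident s t y :&: D| <= 1) ->
  c4c_cubic (cover_src s (k := k)) (cover_tgt t D (k := k)).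
Proof.
case=> hl hc h4 D2 Dm.
have hHl : loopless (cover_src s (k := k)) (cover_tgt t D (k := k)) by apply: cover_loopless.
split; [exact: hHl | exact: cover_cubic | apply: trivial_3cuts_c4c => //].
exact: cover_trivial_3cuts (c4c_trivial_3cuts hl hc h4) D2 Dm.
Qed.

Lemma covers_many_abnormal (V E : finType) (s t : E -> V) : c4c_cubic s t ->
  (forall c, proper_coloring s t c -> 9 < #|abnormal_edges s t c|) -> 5 <= #|V| ->
  exists D : {set E}, forall k, c4c_cubic (cover_src s (k := k)) (cover_tgt t D (k := k)) /\
    forall cH, proper_coloring (cover_src s (k := k)) (cover_tgt t D (k := k)) cH ->
      k.+2 <= #|abnormal_edges (cover_src s (k := k)) (cover_tgt t D (k := k)) cH|.
Proof.
move=> hG many card_V; case: (hG) => hl hc h4.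
have [D [D2 Dm near9]] := exists_twisting_pair hl hc (c4c_trivial_3cuts hl hc h4) card_V.
exists D => k; split; first exact: cover_c4c_cubic.
by move=> cH cHp; apply: card_abnormal_cover.
Qed.

Theorem mainTheorem5 :
  (forall (V E : finType) (s t : E -> V), c4c_cubic s t ->
     exists c : E -> 'I_5, proper_coloring s t c /\ #|abnormal_edges s t c| <= 9)
  <->
  (exists f : nat -> nat, sublinear f /\
     forall (V E : finType) (s t : E -> V), c4c_cubic s t ->
       exists c : E -> 'I_5, proper_coloring s t c /\
         #|abnormal_edges s t c| <= f #|V|).
Proof.
split=> [ha | [f [f_sub hf]] V E s t hG].
  by exists (fun=> 9); split; [exact: sublinear_const | exact: ha].
case: (classic (exists c, proper_coloring s t c /\ #|abnormal_edges s t c| <= 9)) => // no9.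
have many c : proper_coloring s t c -> 9 < #|abnormal_edges s t c|.
  by move=> cp; rewrite ltnNge; apply/negP => le9; apply: no9; exists c.
have card_V : 5 <= #|V|.
  have [c0 [c0p _]] := hf _ _ _ _ hG; have := leq_trans (many c0 c0p) (max_card _).
  by case: hG => hl hc _; have := cubic_card_edges hl hc; lia.
have [D covers] := covers_many_abnormal hG many card_V.
case: (not_sublinear (n := #|V|) _ _ f_sub) => [|k]; first lia.
have [cover_G many_k] := covers k.
have [cH [cHp cHb]] := hf _ _ _ _ cover_G.
by apply: leq_trans (many_k cH cHp) _; rewrite card_prod card_ord in cHb.
Qed.
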